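(* For even $m\ge 18$, let $G^{\mathrm{dist}}_m$ be the graph with vertex set $\{u^*\}\cup A\cup\{z_1,z_2,x,y\}\cup L$, where $A=\{a_1,a_2,a_3,a_4\}$ induces a $K_4$, $|L|=m-15$, $u^*$ is adjacent to every vertex of $A\cup\{z_1,z_2\}\cup L$, and the remaining edges are exactly $z_1x$, $z_2y$, $xy$ (so $G^{\mathrm{dist}}_m$ has $m$ edges). Its spectral radius equals the largest root of \[ f_{\mathrm{dist}}(x)=x^5-4x^4+(11-m)x^3+(4m-45)x^2+(28-2m)x+45-3m, \] and $\rho(G^{\mathrm{dist}}_m)<\rho'(m)$.
   Context: $\rho(G)$ denotes the adjacency spectral radius. For even $m$, $\rho'(m)$ is the largest real root of $p_m(x)=x^4-mx^2-(m-2)x+\frac{m}{2}-1$. *)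

From HB Require Import structures.
From mathcomp Require Import all_boot all_order all_algebra.
Set Implicit Arguments. Unset Strict Implicit. Unset Printing Implicit Defensive.
Import Order.TTheory GRing.Theory Num.Theory.
Local Open Scope ring_scope.

Definition adjmx (R : nzRingType) (n : nat) (e : rel 'I_n) : 'M[R]_n :=
  \matrix_(i, j) (e i j)%:R.

(* For the real symmetric adjacency matrix all eigenvalues are real. *)
Definition is_spectral_radius (R : rcfType) (n : nat) (A : 'M[R]_n) (r : R) :=
  (exists2 l, root (char_poly A) l & `|l| = r) /\
  (forall l, root (char_poly A) l -> `|l| <= r).

Definition is_largest_root (R : rcfType) (p : {poly R}) (r : R) :=
  root p r /\ (forall x, root p x -> x <= r).

(* p_m(x) = x^4 - m x^2 - (m-2) x + m/2 - 1 ; rho'(m) is its largest real root *)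
Definition p_poly (R : rcfType) (m : nat) : {poly R} :=
  'X^4 - (m%:R)%:P * 'X^2 - (m%:R - 2)%:P * 'X + (m%:R / 2 - 1)%:P.

Definition f_dist (R : rcfType) (m : nat) : {poly R} :=
  'X^5 - 4%:P * 'X^4 + (11 - m%:R)%:P * 'X^3 + (4 * m%:R - 45)%:P * 'X^2
  + (28 - 2 * m%:R)%:P * 'X + (45 - 3 * m%:R)%:P.

(* The graph G^dist_m on vertex set 'I_(m-6), labelled:
   0 = u*, 1..4 = A = {a1..a4}, 5 = z1, 6 = z2, 7 = x, 8 = y,
   9..m-7 = L (so |L| = m-15). *)
Definition dist_edge0 (i j : nat) : bool :=
  [|| (i == 0%N) && ((1 <= j <= 6)%N || (9 <= j)%N),
      [&& (1 <= i <= 4)%N, (1 <= j <= 4)%N & i != j],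
      (i == 5%N) && (j == 7%N),
      (i == 6%N) && (j == 8%N) |
      (i == 7%N) && (j == 8%N)].

Definition Gdist (m : nat) : rel 'I_(m - 6) :=
  fun i j => dist_edge0 i j || dist_edge0 j i.

(** The graph has an explicit positive left eigenvector for each root [t > 3]
   of [f_dist]: its entries are constant on the vertex classes [u*], [A],
   [{z1, z2}], [{x, y}], [L], and all eigen-equations except the one at [u*]
   hold identically, while that one is [f_dist(t) = 0].  For a nonnegative
   matrix, the eigenvalue of a positive eigenvector dominates the modulus of
   every eigenvalue, so the root [t0] of [f_dist] found in [[21/5, m]] is both
   the spectral radius and the largest root of [f_dist].  Finally
   [(t-3)(t^2-t-1) p_m(t) = (t^2+t-1/2) f_dist(t) - Q(t-4)/2] with [Q(s) > 0]
   for [s >= 1/5], so [p_m(t0) < 0 <= p_m(m)] and [p_m] has a root beyond [t0]. *)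

From mathcomp Require Import all_boot all_order all_algebra polyrcf.
From mathcomp Require Import ring lra zify.

Set Implicit Arguments.
Unset Strict Implicit.
Unset Printing Implicit Defensive.

Import Order.TTheory GRing.Theory Num.Theory.
Local Open Scope ring_scope.

Section PositiveEigenvector.

Variables (R : realFieldType) (n : nat) (A : 'M[R]_n) (w : 'rV[R]_n) (t : R).
Hypotheses (A_ge0 : forall i j, 0 <= A i j) (w_gt0 : forall i, 0 < w 0 i)
           (wA : w *m A = t *: w).

(* Compare an eigenvector [v] with [w] at a coordinate maximising [|v_i| / w_i]. *)
Lemma normr_eigenvalue_le l : eigenvalue A l -> `|l| <= t.
Proof.
move=> /eigenvalueP [v vA v_neq0].
have [i0 vi0_neq0] : exists i, v 0 i != 0.
  apply/existsP; apply: contraR v_neq0 => /existsPn v0.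
  by apply/eqP/rowP => i; rewrite mxE; apply/eqP/negbNE.
pose ratio i := `|v 0 i| / w 0 i.
have [j _ j_max] := arg_maxP ratio (isT : predT i0).
have ratio_j_gt0 : 0 < ratio j.
  by apply: lt_le_trans (j_max i0 isT); rewrite divr_gt0 ?normr_gt0.
have vj_gt0 : 0 < `|v 0 j| by move: ratio_j_gt0; rewrite pmulr_lgt0 ?invr_gt0.
have coord_eq (u : 'rV[R]_n) s :
    u *m A = s *: u -> s * u 0 j = \sum_i u 0 i * A i j.
  by move=> /(congr1 (fun M : 'rV_n => M 0 j)); rewrite !mxE => <-.
rewrite -(ler_pM2r vj_gt0) -normrM (coord_eq _ _ vA).
apply: le_trans (ler_norm_sum _ _ _) _.
apply: (@le_trans _ _ (\sum_i ratio j * (w 0 i * A i j))).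
  apply: ler_sum => i _; rewrite normrM (ger0_norm (A_ge0 _ _)) mulrA.
  apply: ler_wpM2r; first exact: A_ge0.
  by rewrite -ler_pdivrMr ?w_gt0 //; exact: j_max.
by rewrite -mulr_sumr -(coord_eq _ _ wA) mulrCA /ratio mulfVK ?gt_eqF // mulrC.
Qed.

Hypothesis n_gt0 : (0 < n)%N.

Lemma eigenvalue_pos_eigenvector : eigenvalue A t.
Proof.
apply/eigenvalueP; exists w => //; apply/eqP => /rowP /(_ (Ordinal n_gt0)).
by rewrite mxE => /eqP; rewrite gt_eqF ?w_gt0.
Qed.

End PositiveEigenvector.

Lemma spectral_radius_pos_eigenvector (R : rcfType) n (A : 'M[R]_n)
    (w : 'rV[R]_n) (t : R) :
  (0 < n)%N -> (forall i j, 0 <= A i j) -> (forall i, 0 < w 0 i) ->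
  w *m A = t *: w -> is_spectral_radius A t.
Proof.
move=> n_gt0 A_ge0 w_gt0 wA.
have t_eig := eigenvalue_pos_eigenvector w_gt0 wA n_gt0.
have bound l : root (char_poly A) l -> `|l| <= t.
  by rewrite -eigenvalue_root_char; apply: normr_eigenvalue_le.
split=> //; exists t; first by rewrite -eigenvalue_root_char.
by apply/eqP; rewrite eq_le bound -?eigenvalue_root_char // ler_norm.
Qed.

Lemma exists_largest_root (R : rcfType) (p : {poly R}) r :
  p != 0 -> root p r -> exists x, is_largest_root p x.
Proof.
move=> p_neq0 pr.
have mem_roots x : (x \in rootsR p) = root p x by rewrite -roots_on_rootsR.
have r_idx : (index r (rootsR p) < size (rootsR p))%N
  by rewrite index_mem mem_roots.
have [i _ i_max] := arg_maxP (fun i : 'I_(size (rootsR p)) => (rootsR p)`_i)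
                             (isT : predT (Ordinal r_idx)).
exists (rootsR p)`_i; split; first by rewrite -mem_roots mem_nth.
move=> x px; rewrite -(nth_index 0 (_ : x \in rootsR p)) ?mem_roots //.
by apply: (i_max (Ordinal _)); rewrite // index_mem mem_roots.
Qed.

Lemma exists_largest_root_gt (R : rcfType) (p : {poly R}) a b :
  a <= b -> p.[a] < 0 -> 0 <= p.[b] -> exists2 r, is_largest_root p r & a < r.
Proof.
move=> le_ab pa_lt0 pb_ge0.
have p_sign : p.[a] <= 0 <= p.[b] by rewrite ltW.
have [r /andP [le_ar _] pr] := poly_ivt le_ab p_sign.
have p_neq0 : p != 0 by apply: contraTneq pa_lt0 => ->; rewrite horner0 ltxx.
have [x [px x_max]] := exists_largest_root p_neq0 pr.
exists x => //; apply: lt_le_trans (x_max r pr).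
rewrite lt_neqAle le_ar andbT; apply: contraTneq pa_lt0 => ->.
by move/eqP: pr => ->; rewrite ltxx.
Qed.

Lemma horner_f_dist (R : rcfType) m (t : R) : (f_dist R m).[t] =
  t ^+ 5 - 4 * t ^+ 4 + (11 - m%:R) * t ^+ 3 + (4 * m%:R - 45) * t ^+ 2
  + (28 - 2 * m%:R) * t + (45 - 3 * m%:R).
Proof. by rewrite !(hornerD, hornerN, hornerCM, hornerXn, hornerX, hornerC). Qed.

Lemma horner_p_poly (R : rcfType) m (t : R) : (p_poly R m).[t] =
  t ^+ 4 - m%:R * t ^+ 2 - (m%:R - 2) * t + (m%:R / 2 - 1).
Proof. by rewrite !(hornerD, hornerN, hornerCM, hornerXn, hornerX, hornerC). Qed.

Lemma f_dist_root_between (R : rcfType) m : (18 <= m)%N ->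
  exists2 t : R, root (f_dist R m) t & 21/5 <= t <= m%:R.
Proof.
move=> m_ge18; have : 18 <= m%:R :> R by rewrite (ler_nat R 18 m).
set M : R := m%:R => M_ge18.
have f_lo : (f_dist R m).[21/5] <= 0 by rewrite horner_f_dist -/M; lra.
have f_hi : 0 <= (f_dist R m).[M].
  have -> : (f_dist R m).[M] =
      M ^+ 4 * (M - 5) + M ^+ 2 * (15 * M - 47) + (25 * M + 45).
    by rewrite horner_f_dist -/M; ring.
  by rewrite !addr_ge0 // ?mulr_ge0 ?exprn_ge0 //; lra.
have le_M : 21/5 <= M by lra.
have f_sign : (f_dist R m).[21/5] <= 0 <= (f_dist R m).[M] by rewrite f_lo f_hi.
by have [t] := poly_ivt le_M f_sign; exists t.
Qed.

Lemma p_poly_lt0_at_f_dist_root (R : rcfType) m (t : R) :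
  root (f_dist R m) t -> 21/5 <= t -> (p_poly R m).[t] < 0.
Proof.
move=> /eqP; rewrite horner_f_dist horner_p_poly => f_t t_ge.
set M : R := m%:R in f_t *.
have D_gt0 : 0 < (t - 3) * (t ^+ 2 - t - 1) by apply: mulr_gt0; nra.
rewrite -(pmulr_rlt0 _ D_gt0).
set s := t - 4; have s_ge : 1/5 <= s by rewrite /s; lra.
have -> : (t - 3) * (t ^+ 2 - t - 1) *
          (t ^+ 4 - M * t ^+ 2 - (M - 2) * t + (M / 2 - 1)) =
    - (-287 + 5022 * s + 6187 * s ^+ 2 + 2789 * s ^+ 3
       + 586 * s ^+ 4 + 57 * s ^+ 5 + 2 * s ^+ 6) / 2
    + (t ^+ 2 + t - 1/2) * (t ^+ 5 - 4 * t ^+ 4 + (11 - M) * t ^+ 3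
       + (4 * M - 45) * t ^+ 2 + (28 - 2 * M) * t + (45 - 3 * M)).
  by rewrite /s; field.
rewrite f_t mulr0 addr0.
have : 0 <= 6187 * s ^+ 2 + 2789 * s ^+ 3 + 586 * s ^+ 4 + 57 * s ^+ 5
            + 2 * s ^+ 6.
  by rewrite !addr_ge0 // mulr_ge0 // exprn_ge0 //; lra.
lra.
Qed.

Lemma p_poly_ge0_at_m (R : rcfType) m : (1 <= m)%N -> 0 <= (p_poly R m).[m%:R].
Proof.
move=> m_ge1; have : 1 <= m%:R :> R by rewrite (ler_nat R 1 m).
set M : R := m%:R => M_ge1.
have -> : (p_poly R m).[M] = M * (M - 1) * (M ^+ 2 - 1) + (3/2 * M - 1).
  by rewrite horner_p_poly -/M; field.
by rewrite addr_ge0 ?mulr_ge0 //; nra.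
Qed.

Section DistEigenvector.

Variables (R : rcfType) (m : nat).

Definition dist_weight (t : R) (k : nat) : R :=
  match k with
  | 0 => t * (t - 3) * (t ^+ 2 - t - 1)
  | 1 | 2 | 3 | 4 => t * (t ^+ 2 - t - 1)
  | 5 | 6 => t * (t - 3) * (t - 1)
  | 7 | 8 => t * (t - 3)
  | _ => (t - 3) * (t ^+ 2 - t - 1)
  end.

Definition dist_vector (t : R) : 'rV[R]_(m - 6) := \row_j dist_weight t j.

Definition dist_adj (i j : nat) : bool := dist_edge0 i j || dist_edge0 j i.

Lemma dist_adj_leafr i k : dist_adj i (9 + k) = (i == 0)%N.
Proof. by do 9 (case: i => [|i] //). Qed.

Lemma dist_adj_leafl i k : dist_adj (9 + k) i = (i == 0)%N.
Proof. by rewrite /dist_adj orbC -(dist_adj_leafr i k). Qed.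

Lemma dist_vector_eigen t : (15 <= m)%N -> root (f_dist R m) t ->
  dist_vector t *m adjmx R (@Gdist m) = t *: dist_vector t.
Proof.
move=> m_ge15 /eqP; rewrite horner_f_dist => f_t.
apply/rowP => j; rewrite !mxE.
under eq_bigr do rewrite !mxE -/(dist_adj _ _).
rewrite -(big_mkord xpredT (fun i => dist_weight t i * (dist_adj i j)%:R)).
rewrite (big_cat_nat _ (n := 9)) //=; last lia.
have leaves : \sum_(9 <= i < m - 6) dist_weight t i * (dist_adj i j)%:R =
    (m%:R - 15) * ((t - 3) * (t ^+ 2 - t - 1)) * ((j : nat) == 0%N)%:R.
  rewrite (eq_big_nat _ _
    (F2 := fun _ => (t - 3) * (t ^+ 2 - t - 1) * ((j : nat) == 0%N)%:R)).
    by rewrite sumr_const_nat -subnDA -[_ *+ _]mulr_natl natrB //; ring.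
  by move=> i /andP [i_ge9 _]; rewrite -(subnKC i_ge9) dist_adj_leafl.
rewrite {}leaves big_nat !big_cons big_nil /=.
case: j => [[|j] j_lt] /=; first by rewrite /dist_adj /=; lra.
have [j_lt8 | j_ge8] := ltnP j 8.
  do 8 (case: j j_lt j_lt8 => [|j] j_lt j_lt8 //;
           first by rewrite /dist_adj /=; ring).
by rewrite -(subnKC j_ge8) -addSn dist_adj_leafr /dist_adj /=; ring.
Qed.

Lemma dist_weight_gt0 t k : 3 < t -> 0 < dist_weight t k.
Proof.
move=> t_gt3.
have [t_gt0 t3_gt0 t1_gt0] : [/\ 0 < t, 0 < t - 3 & 0 < t - 1] by split; lra.
have q_gt0 : 0 < t ^+ 2 - t - 1 by nra.
by do 9 (case: k => [|k]; first by rewrite /= ?mulr_gt0); rewrite /= ?mulr_gt0.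
Qed.

Lemma dist_vector_neq0 t : (16 <= m)%N -> dist_vector t != 0.
Proof.
move=> m_ge16; apply/eqP => w0.
have entry k : (k < m - 6)%N -> dist_weight t k = 0.
  by move=> k_lt; move/rowP/(_ (Ordinal k_lt)): w0; rewrite !mxE.
have eA : t * (t ^+ 2 - t - 1) = 0 := entry 1%N ltac:(lia).
have eX : t * (t - 3) = 0 := entry 7%N ltac:(lia).
have eL : (t - 3) * (t ^+ 2 - t - 1) = 0 := entry 9%N ltac:(lia).
have q0 : t ^+ 2 - t - 1 = 0 by lra.
have t_half : t = 1/2 by lra.
by move: q0; rewrite t_half; lra.
Qed.

Lemma f_dist_root_char_poly t : (16 <= m)%N -> root (f_dist R m) t ->
  root (char_poly (adjmx R (@Gdist m))) t.
Proof.
move=> m_ge16 ft; rewrite -eigenvalue_root_char; apply/eigenvalueP.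
exists (dist_vector t); last exact: dist_vector_neq0.
by apply: dist_vector_eigen => //; lia.
Qed.

End DistEigenvector.

Theorem proposition6p3 (R : rcfType) (m : nat) :
  ~~ odd m -> (18 <= m)%N ->
  exists rho : R,
    [/\ is_spectral_radius (adjmx R (@Gdist m)) rho,
        is_largest_root (f_dist R m) rho &
        exists2 rho' : R, is_largest_root (p_poly R m) rho' & rho < rho'].
Proof.
move=> _ m_ge18.
have [t ft /andP [t_ge t_le]] := f_dist_root_between R m_ge18.
have spec : is_spectral_radius (adjmx R (@Gdist m)) t.
  apply: (@spectral_radius_pos_eigenvector _ _ _ (dist_vector m t)).
  - by rewrite subn_gt0; lia.
  - by move=> i j; rewrite mxE ler0n.
  - by move=> i; rewrite mxE dist_weight_gt0 //; lra.
  - by apply: dist_vector_eigen => //; lia.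
exists t; split => //.
  split => // x fx; apply: le_trans (ler_norm x) (spec.2 x _).
  by apply: f_dist_root_char_poly => //; lia.
apply: exists_largest_root_gt t_le (p_poly_lt0_at_f_dist_root ft t_ge) _.
by apply: p_poly_ge0_at_m; lia.
Qed.
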